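(* Let $t\in\mathbb{N}\setminus\{0,1\}$, let $K_1,\ldots,K_t,L_1,\ldots,L_t$ be bi--lattices with $|K_i|>2$ for all $i\in[1,t]$, let $K=\boxplus_{i=1}^tK_i$ and $L=\boxplus_{i=1}^t({\cal L}_2\oplus L_i\oplus{\cal L}_2)$. Then: (1) ${\rm Con}_{\mathbb{BI}}(K)=\{\boxplus_{i=1}^t\alpha_i\ :\ \alpha_i\in{\rm Con}_{\mathbb{BI}01}(K_i)\text{ for all }i\in[1,t]\}\cup\{\nabla_K\}\cong\left(\prod_{i=1}^t{\rm Con}_{\mathbb{BI}01}(K_i)\right)\oplus{\cal L}_2$; (2) ${\rm Con}_{\mathbb{BI}}(L)=\{eq(\{\{0\},\{1\}\}\cup\bigcup_{i=1}^tL_i/\alpha_i)\ :\ \alpha_i\in{\rm Con}_{\mathbb{BI}}(L_i)\text{ for all }i\in[1,t]\}\cup\{\nabla_L\}\cong\left(\prod_{i=1}^t{\rm Con}_{\mathbb{BI}}(L_i)\right)\oplus{\cal L}_2$.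
   Context: A bi--lattice is a bounded lattice with a unary operation $'$ satisfying $a''=a$ and $a\leq b\Rightarrow b'\leq a'$. ${\rm Con}_{\mathbb{BI}}(A)$ is the lattice of lattice congruences $\theta$ of $A$ with $(a,b)\in\theta\Rightarrow(a',b')\in\theta$; ${\rm Con}_{\mathbb{BI}01}(A)$ is the set of those $\theta\in{\rm Con}_{\mathbb{BI}}(A)$ with $0/\theta=\{0\}$ and $1/\theta=\{1\}$. $\Delta_A$, $\nabla_A$ are the identity and total relations; for a partition $\pi$ of a set, $eq(\pi)$ is the corresponding equivalence. ${\cal L}_2$ is the two--element chain. Ordinal sum $A\oplus B$ (lattice $A$ with top, $B$ with bottom): $B$ placed above $A$ with the top of $A$ identified with the bottom of $B$; for a bi--lattice $M$, ${\cal L}_2\oplus M\oplus{\cal L}_2$ is the bi--lattice obtained by adding a new bottom $0$ and new top $1$ to $M$, with $0'=1$, $1'=0$ and the involution of $M$ on $M$. Horizontal sum $A\boxplus B$ of non--trivial bounded lattices: the disjoint union of $A$ and $B$ with their bottoms identified (as $0$) and their tops identified (as $1$), ordered by the union of the two orders; for bi--lattices its involution is that of $A$ on $A$ and that of $B$ on $B$; this operation is associative and commutative. For equivalences $\delta\neq\nabla_A$ on $A$ and $\varepsilon\neq\nabla_B$ on $B$, $\delta\boxplus\varepsilon$ is the equivalence on $A\boxplus B$ whose classes are the classes of $\delta$ other than $0/\delta,1/\delta$, the classes of $\varepsilon$ other than $0/\varepsilon,1/\varepsilon$, and $0/\delta\cup0/\varepsilon$, $1/\delta\cup1/\varepsilon$;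 this operation is extended associatively to $\boxplus_{i=1}^t\alpha_i$. Products of lattices are direct products; $\cong$ is lattice isomorphism. *)

From Stdlib Require Import ClassicalEpsilon.
From mathcomp Require Import ssreflect ssrfun ssrbool eqtype ssrnat fintype.

Set Implicit Arguments.
Unset Strict Implicit.
Unset Printing Implicit Defensive.

Record biops := BiOps {
  bcar :> Type;
  bmeet : bcar -> bcar -> bcar;
  bjoin : bcar -> bcar -> bcar;
  binv  : bcar -> bcar;
  bbot  : bcar;
  btop  : bcar }.

Arguments bmeet {b}. Arguments bjoin {b}. Arguments binv {b}.

Definition ble (A : biops) (x y : A) : Prop := bmeet x y = x.

Definition is_bilattice (A : biops) : Prop :=
  (forall x y : A, bmeet x y = bmeet y x) /\
  (forall x y : A, bjoin x y = bjoin y x) /\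
  (forall x y z : A, bmeet x (bmeet y z) = bmeet (bmeet x y) z) /\
  (forall x y z : A, bjoin x (bjoin y z) = bjoin (bjoin x y) z) /\
  (forall x y : A, bmeet x (bjoin x y) = x) /\
  (forall x y : A, bjoin x (bmeet x y) = x) /\
  (forall x : A, ble (bbot A) x /\ ble x (btop A)) /\
  (forall x : A, binv (binv x) = x) /\
  (forall x y : A, ble x y -> ble (binv y) (binv x)).

Definition rel_of (A : Type) := A -> A -> Prop.

Definition is_equiv (A : Type) (th : rel_of A) : Prop :=
  [/\ (forall x, th x x), (forall x y, th x y -> th y x) &
      (forall x y z, th x y -> th y z -> th x z)].

Definition isConBI (A : biops) (th : rel_of A) : Prop :=
  [/\ is_equiv th,
      (forall a b c d, th a b -> th c d -> th (bmeet a c) (bmeet b d)),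
      (forall a b c d, th a b -> th c d -> th (bjoin a c) (bjoin b d)) &
      (forall a b, th a b -> th (binv a) (binv b))].

Definition isConBI01 (A : biops) (th : rel_of A) : Prop :=
  [/\ isConBI th,
      (forall x, th x (bbot A) -> x = bbot A) &
      (forall x, th x (btop A) -> x = btop A)].

Definition nabla (A : Type) : rel_of A := fun _ _ => True.

Definition ConBI (A : biops) := {th : rel_of A | isConBI th}.
Definition ConBI01 (A : biops) := {th : rel_of A | isConBI01 th}.

Definition rel_incl (A : Type) (th ph : rel_of A) : Prop :=
  forall x y, th x y -> ph x y.

(* Ordinal sum L2 (+) M (+) L2 : new bottom and new top.               *)
Inductive ocar (M : Type) := OBot | OMid of M | OTop.
Arguments OBot {M}. Arguments OTop {M}.

Definition omeet (M : biops) (u v : ocar M) : ocar M :=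
  match u, v with
  | OBot, _ => OBot
  | _, OBot => OBot
  | OTop, v => v
  | u, OTop => u
  | OMid x, OMid y => OMid (bmeet x y)
  end.

Definition ojoin (M : biops) (u v : ocar M) : ocar M :=
  match u, v with
  | OTop, _ => OTop
  | _, OTop => OTop
  | OBot, v => v
  | u, OBot => u
  | OMid x, OMid y => OMid (bjoin x y)
  end.

Definition oinv (M : biops) (u : ocar M) : ocar M :=
  match u with OBot => OTop | OTop => OBot | OMid x => OMid (binv x) end.

Definition osum (M : biops) : biops :=
  BiOps (@omeet M) (@ojoin M) (@oinv M) OBot OTop.

(* Horizontal sum of a family (A i)_{i in I}: bottoms identified as 0,  *)
(* tops identified as 1, the remaining elements kept disjoint.          *)
Section HSum.
Variables (I : eqType) (A : I -> biops).

Inductive hcar :=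
  | H0 | H1
  | Hin (i : I) (x : A i) of x <> bbot (A i) /\ x <> btop (A i).

Definition hemb (i : I) (x : A i) : hcar :=
  match excluded_middle_informative (x = bbot (A i)) with
  | left _ => H0
  | right n0 =>
    match excluded_middle_informative (x = btop (A i)) with
    | left _ => H1
    | right n1 => Hin (conj n0 n1)
    end
  end.

Definition htr (i j : I) (e : i = j) (x : A i) : A j :=
  eq_rect i (fun k => bcar (A k)) x j e.

Definition hmeet (u v : hcar) : hcar :=
  match u, v with
  | H0, _ => H0
  | _, H0 => H0
  | H1, v => v
  | u, H1 => u
  | @Hin i x _, @Hin j y _ =>
    match i =P j with
    | ReflectT e => hemb (bmeet (htr e x) y)
    | ReflectF _ => H0
    end
  end.

Definition hjoin (u v : hcar) : hcar :=
  match u, v with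
  | H1, _ => H1
  | _, H1 => H1
  | H0, v => v
  | u, H0 => u
  | @Hin i x _, @Hin j y _ =>
    match i =P j with
    | ReflectT e => hemb (bjoin (htr e x) y)
    | ReflectF _ => H1
    end
  end.

Definition hinv (u : hcar) : hcar :=
  match u with
  | H0 => H1
  | H1 => H0
  | @Hin i x _ => hemb (binv x)
  end.

Definition hsum : biops := BiOps hmeet hjoin hinv H0 H1.

(* boxplus_i delta_i : classes of delta_i other than 0/delta_i, 1/delta_i,
   together with  U_i 0/delta_i  and  U_i 1/delta_i. *)
Definition hsum_rel (d : forall i, rel_of (A i)) : rel_of hcar :=
  fun u v =>
    (exists i (x y : A i), d i x y /\ u = hemb x /\ v = hemb y)
    \/ (exists i j (x : A i) (y : A j),
          [/\ d i x (bbot (A i)), d j y (bbot (A j)), u = hemb x & v = hemb y])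
    \/ (exists i j (x : A i) (y : A j),
          [/\ d i x (btop (A i)), d j y (btop (A j)), u = hemb x & v = hemb y]).

(* eq({{0},{1}} U U_i A_i/alpha_i) where A i = L2 (+) L_i (+) L2 and L_i
   is identified with the middle part of A i *)
End HSum.

Arguments H0 {I A}. Arguments H1 {I A}.

Definition lsum_rel (I : eqType) (L : I -> biops)
  (a : forall i, rel_of (L i)) : rel_of (hcar (fun i => osum (L i))) :=
  fun u v =>
    (u = H0 /\ v = H0) \/ (u = H1 /\ v = H1) \/
    (exists i (x y : L i), a i x y /\
        u = hemb (A := fun i => osum (L i)) (OMid x) /\
        v = hemb (A := fun i => osum (L i)) (OMid y)).

Definition prod_le (I : Type) (P : I -> Type) (le : forall i, P i -> P i -> Prop)
  (f g : forall i, P i) : Prop := forall i, le i (f i) (g i).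

(* ordinal sum P (+) L2 of a poset P with a top: one new element above *)
Definition addtop_le (P : Type) (le : P -> P -> Prop) (u v : option P) : Prop :=
  match u, v with
  | _, None => True
  | None, Some _ => False
  | Some x, Some y => le x y
  end.

Definition order_iso (P Q : Type) (leP : P -> P -> Prop) (leQ : Q -> Q -> Prop)
  : Prop :=
  exists f : P -> Q, bijective f /\ forall x y, leP x y <-> leQ (f x) (f y).

Definition ConBI_le (A : biops) (x y : ConBI A) := rel_incl (sval x) (sval y).
Definition ConBI01_le (A : biops) (x y : ConBI01 A) := rel_incl (sval x) (sval y).

From mathcomp Require Import ssreflect ssrfun ssrbool eqtype ssrnat fintype.
From Stdlib Require Import FunctionalExtensionality PropExtensionality.
From Stdlib Require Import ProofIrrelevance ClassicalEpsilon.

Set Implicit Arguments.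
Unset Strict Implicit.
Unset Printing Implicit Defensive.

(* A BI-congruence of a horizontal sum either identifies 0 with 1, and is then
   total, or has {0} and {1} as classes: an inner element congruent to 0 would,
   through an inner element of another summand, make 0 congruent to 1.  In the
   latter case inner elements of distinct summands are never congruent (their
   meet is 0), so the congruence is glued from its restrictions to the
   summands, which lie in Con_BI01; conversely every such gluing is a
   congruence.  Part (2) is the case K_i = L2 (+) L_i (+) L2, whose Con_BI01
   is Con_BI(L_i) via restriction to L_i. *)

Definition inner (B : biops) (x : B) := x <> bbot B /\ x <> btop B.

Lemma not_inner (B : biops) (x : B) : ~ inner x -> x = bbot B \/ x = btop B.
Proof.
move=> nx; case: (classic (x = bbot B)) => [|nb]; first by left.
by right; apply: NNPP => nt; apply: nx.
Qed.

Lemma distinct3_inner (B : biops) (a b c : B) :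
  [/\ a <> b, a <> c & b <> c] -> exists x : B, inner x.
Proof.
case=> ab ac bc.
have [ia | /not_inner [] ea] := classic (inner a); first by exists a.
- have [ib | /not_inner [] eb] := classic (inner b); first by exists b.
  + by case: ab; rewrite ea eb.
  + by exists c; split=> ec; [apply: ac | apply: bc]; rewrite ec.
- have [ib | /not_inner [] eb] := classic (inner b); first by exists b.
  + by exists c; split=> ec; [apply: bc | apply: ac]; rewrite ec.
  + by case: ab; rewrite ea eb.
Qed.

Section Bilattice.
Variable M : biops.
Hypothesis HM : is_bilattice M.

Lemma bmeetC (x y : M) : bmeet x y = bmeet y x.
Proof. by case: HM. Qed.
Lemma bjoinC (x y : M) : bjoin x y = bjoin y x.
Proof. by case: HM => _ []. Qed.
Lemma bmeetKU (x y : M) : bmeet x (bjoin x y) = x.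
Proof. by case: HM => _ [_ [_ [_ []]]]. Qed.
Lemma bjoinKI (x y : M) : bjoin x (bmeet x y) = x.
Proof. by case: HM => _ [_ [_ [_ [_ []]]]]. Qed.
Lemma bmeet0x (x : M) : bmeet (bbot M) x = bbot M.
Proof. by case: HM => _ [_ [_ [_ [_ [_ [/(_ x) [] ]]]]]]. Qed.
Lemma bmeetx1 (x : M) : bmeet x (btop M) = x.
Proof. by case: HM => _ [_ [_ [_ [_ [_ [/(_ x) [] ]]]]]]. Qed.
Lemma bmeetx0 (x : M) : bmeet x (bbot M) = bbot M.
Proof. by rewrite bmeetC bmeet0x. Qed.
Lemma bmeet1x (x : M) : bmeet (btop M) x = x.
Proof. by rewrite bmeetC bmeetx1. Qed.
Lemma bjoinx0 (x : M) : bjoin x (bbot M) = x.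
Proof. by rewrite -{2}(bjoinKI x (bbot M)) bmeetx0. Qed.
Lemma bjoin0x (x : M) : bjoin (bbot M) x = x.
Proof. by rewrite bjoinC bjoinx0. Qed.
Lemma bjoin1x (x : M) : bjoin (btop M) x = btop M.
Proof. by rewrite -{1}(bmeet1x x) bjoinKI. Qed.
Lemma bjoinx1 (x : M) : bjoin x (btop M) = btop M.
Proof. by rewrite bjoinC bjoin1x. Qed.
Lemma bmeetxx (x : M) : bmeet x x = x.
Proof. by rewrite -{2}(bjoinKI x x) bmeetKU. Qed.
Lemma bjoinxx (x : M) : bjoin x x = x.
Proof. by rewrite -{2}(bmeetKU x x) bjoinKI. Qed.
Lemma binvK (x : M) : binv (binv x) = x.
Proof. by case: HM => _ [_ [_ [_ [_ [_ [_ []]]]]]]. Qed.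
Lemma binv0 : binv (bbot M) = btop M.
Proof.
case: HM => _ [_ [_ [_ [_ [_ [_ [_ /(_ _ _ (bmeet0x (binv (btop M))))]]]]]]].
by rewrite binvK /ble bmeet1x.
Qed.
Lemma binv1 : binv (btop M) = bbot M.
Proof. by rewrite -binv0 binvK. Qed.
Lemma binv_inner (x : M) : inner x -> inner (binv x).
Proof.
case=> x0 x1; split=> E; [apply: x1 | apply: x0];
by rewrite -(binvK x) E ?binv0 ?binv1.
Qed.
Lemma inner_bot_neq_top (x : M) : inner x -> bbot M <> btop M.
Proof. by case=> x0 _ E; apply: x0; rewrite -(bmeetx1 x) -E bmeetx0. Qed.
End Bilattice.

Section Congruence.
Variables (B : biops) (th : rel_of B).
Hypothesis Hth : isConBI th.

Lemma con_refl x : th x x.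
Proof. by case: Hth => [[]]. Qed.
Lemma con_sym x y : th x y -> th y x.
Proof. by case: Hth => [[_ sym _] _ _ _]; apply: sym. Qed.
Lemma con_trans x y z : th x y -> th y z -> th x z.
Proof. by case: Hth => [[_ _ trans] _ _ _]; apply: trans. Qed.
Lemma con_meet a b c d : th a b -> th c d -> th (bmeet a c) (bmeet b d).
Proof. by case: Hth => _ meet _ _; apply: meet. Qed.
Lemma con_join a b c d : th a b -> th c d -> th (bjoin a c) (bjoin b d).
Proof. by case: Hth => _ _ join _; apply: join. Qed.
Lemma con_inv a b : th a b -> th (binv a) (binv b).
Proof. by case: Hth => _ _ _ inv; apply: inv. Qed.
End Congruence.

Lemma isConBI_ext (B : biops) (th ph : rel_of B) :
  (forall u v, th u v <-> ph u v) -> isConBI th -> isConBI ph.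
Proof.
move=> E Hth; split; first split.
- by move=> x; apply/E; exact: (con_refl Hth).
- by move=> x y /E/(con_sym Hth)/E.
- by move=> x y z /E h1 /E h2; apply/E; apply: (con_trans Hth) h1 h2.
- by move=> a b c d /E h1 /E h2; apply/E; apply: (con_meet Hth).
- by move=> a b c d /E h1 /E h2; apply/E; apply: (con_join Hth).
- by move=> a b /E h; apply/E; apply: (con_inv Hth).
Qed.

Section Congruence01.
Variables (B : biops) (al : rel_of B).
Hypothesis Hal : isConBI01 al.

Lemma con01_ConBI : isConBI al.
Proof. by case: Hal. Qed.

Lemma con01_class0 x : al x (bbot B) -> x = bbot B.
Proof. by case: Hal => _ class0 _; apply: class0. Qed.

Lemma con01_class1 x : al x (btop B) -> x = btop B.
Proof. by case: Hal => _ _ class1; apply: class1. Qed.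

Lemma con01_outer x y : al x y -> ~ inner x -> y = x.
Proof.
move=> h /not_inner [] E; move: h; rewrite E => /(con_sym con01_ConBI).
- exact: con01_class0.
- exact: con01_class1.
Qed.

Lemma con01_inner x y : al x y -> inner x -> inner y.
Proof.
move=> h ix; apply: NNPP => iy; move: ix.
by rewrite (con01_outer (con_sym con01_ConBI h) iy).
Qed.
End Congruence01.

Lemma nabla_ConBI (B : biops) : isConBI (@nabla B).
Proof. by []. Qed.

Lemma rel_sig_ext (T : Type) (P : rel_of T -> Prop) (a b : {th : rel_of T | P th}) :
  (forall x y, sval a x y <-> sval b x y) -> a = b.
Proof.
case: a b => [a pa] [b pb] /= E.
have eab : a = b.
  by do 2!apply: functional_extensionality => ?; apply: propositional_extensionality.
by subst b; congr exist; apply: proof_irrelevance.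
Qed.

Section HorizontalSum.
Variables (I : eqType) (A : I -> biops).
Hypothesis HA : forall i, is_bilattice (A i).
Hypothesis A_inner : forall i, exists x : A i, inner x.

Local Notation emb := (@hemb I A _).

Let bot_neq_top i : bbot (A i) <> btop (A i).
Proof. by have [x /(inner_bot_neq_top (HA i))] := A_inner i. Qed.

Variant hemb_spec i (x : A i) : hcar A -> Prop :=
  | HembBot of x = bbot (A i) : hemb_spec x H0
  | HembTop of x = btop (A i) : hemb_spec x H1
  | HembIn (p : inner x) : hemb_spec x (Hin p).

Lemma hembP i (x : A i) : hemb_spec x (emb x).
Proof.
rewrite /hemb; case: excluded_middle_informative => [|n0]; first exact: HembBot.
case: excluded_middle_informative => [|n1]; first exact: HembTop.
exact: (HembIn (conj n0 n1)).
Qed.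

Lemma hemb0 i : emb (bbot (A i)) = H0.
Proof. by rewrite /hemb; case: excluded_middle_informative. Qed.

Lemma hemb1 i : emb (btop (A i)) = H1.
Proof. by case: hembP => // [/esym/bot_neq_top | [_ []]]. Qed.

Lemma hemb_Hin i (x : A i) (p : inner x) : emb x = Hin p.
Proof. by case: hembP => [/p.1 | /p.2 | q] //; rewrite (proof_irrelevance _ q p). Qed.

Lemma hemb_eq0 i (x : A i) : emb x = H0 -> x = bbot (A i).
Proof. by case: hembP. Qed.

Lemma hemb_eq1 i (x : A i) : emb x = H1 -> x = btop (A i).
Proof. by case: hembP. Qed.

Definition hval i (d : A i) (u : hcar A) : A i :=
  if u is Hin j x _ then
    if j =P i is ReflectT e then htr e x else d
  else d.

Definition hidx (u : hcar A) : option I := if u is Hin j _ _ then Some j else None.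

Lemma hval_Hin i (x : A i) (p : inner x) d : hval d (Hin p) = x.
Proof. by rewrite /=; case: eqP => // e; rewrite (eq_irrelevance e erefl). Qed.

Lemma hemb_inj i : injective (@hemb I A i).
Proof.
move=> x y; case: hembP => [->|->|p]; case: hembP => [->|->|q] //.
by move/(congr1 (hval x)); rewrite !hval_Hin.
Qed.

Lemma hemb_cross i j (x : A i) (y : A j) : i <> j -> emb x = emb y -> ~ inner x.
Proof.
move=> ij + p; rewrite (hemb_Hin p).
by case: hembP => [_|_|q] //; move/(congr1 hidx) => [].
Qed.

Lemma hemb_outer i j (x : A i) : ~ inner x -> exists y : A j, emb y = emb x.
Proof.
case/not_inner=> ->; [exists (bbot (A j)) | exists (btop (A j))];
by rewrite ?hemb0 ?hemb1.
Qed.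

Lemma hmeet_hemb i (x y : A i) : hmeet (emb x) (emb y) = emb (bmeet x y).
Proof.
have HAi := HA i.
case: hembP => [->|->|p]; case: hembP => [->|->|q];
  rewrite ?bmeet0x ?bmeetx0 ?bmeet1x ?bmeetx1 ?hemb0 ?hemb1 ?(hemb_Hin p) ?(hemb_Hin q) //=.
by case: eqP => // e; rewrite (eq_irrelevance e erefl).
Qed.

Lemma hjoin_hemb i (x y : A i) : hjoin (emb x) (emb y) = emb (bjoin x y).
Proof.
have HAi := HA i.
case: hembP => [->|->|p]; case: hembP => [->|->|q];
  rewrite ?bjoin0x ?bjoinx0 ?bjoin1x ?bjoinx1 ?hemb0 ?hemb1 ?(hemb_Hin p) ?(hemb_Hin q) //=.
by case: eqP => // e; rewrite (eq_irrelevance e erefl).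
Qed.

Lemma hinv_hemb i (x : A i) : hinv (emb x) = emb (binv x).
Proof. by case: hembP => [->|->|//]; rewrite ?binv0 ?binv1 ?hemb0 ?hemb1. Qed.

Lemma hmeet_cross i j (x : A i) (y : A j) :
  i <> j -> inner x -> inner y -> hmeet (emb x) (emb y) = H0.
Proof. by move=> ij p q; rewrite (hemb_Hin p) (hemb_Hin q) /=; case: eqP. Qed.

Lemma hjoin_cross i j (x : A i) (y : A j) :
  i <> j -> inner x -> inner y -> hjoin (emb x) (emb y) = H1.
Proof. by move=> ij p q; rewrite (hemb_Hin p) (hemb_Hin q) /=; case: eqP. Qed.

Variables i1 i2 : I.
Hypothesis i1_neq_i2 : i1 <> i2.

Lemma other_index (i : I) : exists j : I, j <> i.
Proof. by case: (classic (i1 = i)) => [<-|]; [exists i2 => /esym | exists i1]. Qed.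

Lemma hemb_surj (u : hcar A) : exists i (x : A i), u = emb x.
Proof.
case: u => [|| i x p]; last by exists i, x; rewrite (hemb_Hin p).
- by exists i1, (bbot _); rewrite hemb0.
- by exists i1, (btop _); rewrite hemb1.
Qed.

(* For families in Con_BI01 this is [hsum_rel al] (lemma [hsum_relE]). *)
Definition hlift (al : forall i, rel_of (A i)) : rel_of (hsum A) :=
  fun u v => exists i (x y : A i), [/\ al i x y, u = emb x & v = emb y].

Section HsumCongruence.
Variable th : rel_of (hsum A).
Hypothesis Hth : isConBI th.

Lemma hcon_nabla : th H0 H1 -> forall u v, th u v.
Proof.
move=> h01; have h0 u : th u H0.
  by have := con_meet Hth (con_refl Hth u) (con_sym Hth h01); case: u.
by move=> u v; exact: (con_trans Hth (h0 u) (con_sym Hth (h0 v))).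
Qed.

(* If an inner [x] is congruent to 0, take an inner [y] of another summand:
   then [1 = y \/ x ~ y \/ 0 = y] and, as [x' ~ 1], [0 = x' /\ y ~ 1 /\ y = y]. *)
Lemma hcon_class0 : ~ th H0 H1 -> forall u, th u H0 -> u = H0.
Proof.
move=> n01 u hu; have [i [x Eu]] := hemb_surj u; subst u.
have [p|/not_inner [] ex] := classic (inner x); last 2 first.
- by rewrite ex hemb0.
- by rewrite ex hemb1 in hu; case: n01; exact: (con_sym Hth hu).
have [j ji] := other_index i; have [y q] := A_inner j.
have ij : i <> j by move/esym.
have h1 : th (hjoin (emb y) (emb x)) (hjoin (emb y) H0).
  exact: (con_join Hth (con_refl Hth _) hu).
rewrite hjoin_cross // -(hemb0 j) hjoin_hemb bjoinx0 // in h1.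
have h2 : th (hmeet (hinv (emb x)) (emb y)) (hmeet H1 (emb y)).
  exact: (con_meet Hth (con_inv Hth hu) (con_refl Hth _)).
rewrite hinv_hemb (hmeet_cross ij (binv_inner (HA i) p) q) in h2.
rewrite -(hemb1 j) hmeet_hemb bmeet1x // in h2.
by case: n01; exact: (con_trans Hth h2 (con_sym Hth h1)).
Qed.

Lemma hcon_class1 : ~ th H0 H1 -> forall u, th u H1 -> u = H1.
Proof.
move=> n01 u hu; have [i [x Eu]] := hemb_surj u; subst u.
have := hcon_class0 n01 (con_inv Hth hu); rewrite /= hinv_hemb => /hemb_eq0.
by rewrite -{2}(binvK (HA i) x) => ->; rewrite binv0 ?hemb1.
Qed.

Lemma hcon_same_summand : ~ th H0 H1 -> forall u v, th u v ->
  exists i (x y : A i), u = emb x /\ v = emb y.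
Proof.
move=> n01 u v h; have [i [x Eu]] := hemb_surj u; have [j [y Ev]] := hemb_surj v.
have [eij|ij] := classic (i = j); first by subst j; exists i, x, y.
have [ix|nx] := classic (inner x); last first.
  by have [x' Ex'] := hemb_outer j nx; exists j, x', y; rewrite Ex'.
have [iy|ny] := classic (inner y); last first.
  by have [y' Ey'] := hemb_outer i ny; exists i, x, y'; rewrite Ey'.
have := con_meet Hth (con_refl Hth u) h.
rewrite /= Eu Ev hmeet_hemb bmeetxx // hmeet_cross // => /(hcon_class0 n01)/hemb_eq0.
by case: ix.
Qed.

Unset Implicit Arguments.
Definition hrestr (i : I) : rel_of (A i) := fun x y => th (emb x) (emb y).
Set Implicit Arguments.

Lemma hrestr_Con01 : ~ th H0 H1 -> forall i, isConBI01 (hrestr i).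
Proof.
move=> n01 i; rewrite /hrestr; split; first split; first split.
- by move=> x; apply: (con_refl Hth).
- by move=> x y; apply: (con_sym Hth).
- by move=> x y z; apply: (con_trans Hth).
- by move=> a b c d h1 h2; rewrite -!hmeet_hemb; apply: (con_meet Hth).
- by move=> a b c d h1 h2; rewrite -!hjoin_hemb; apply: (con_join Hth).
- by move=> a b h; rewrite -!hinv_hemb; apply: (con_inv Hth).
- by move=> x; rewrite hemb0 => /(hcon_class0 n01)/hemb_eq0.
- by move=> x; rewrite hemb1 => /(hcon_class1 n01)/hemb_eq1.
Qed.

Lemma hcon_hlift : ~ th H0 H1 -> forall u v, th u v <-> hlift hrestr u v.
Proof.
move=> n01 u v; split=> [h | [i [x [y [h -> ->]]]] //].
have [i [x [y [Eu Ev]]]] := hcon_same_summand n01 h.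
by exists i, x, y; rewrite /hrestr -Eu -Ev.
Qed.
End HsumCongruence.

Section HsumLift.
Unset Implicit Arguments.
Variable al : forall i, rel_of (A i).
Set Implicit Arguments.
Hypothesis Hal : forall i, isConBI01 (al i).

Let Hc (i : I) : isConBI (al i) := con01_ConBI (Hal i).

Lemma hlift_refl u : hlift al u u.
Proof.
by have [i [x ->]] := hemb_surj u; exists i, x, x; split=> //; apply: (con_refl (Hc i)).
Qed.

Lemma hsum_relE u v : hsum_rel al u v <-> hlift al u v.
Proof.
split=> [|[i [x [y [h -> ->]]]]]; last by left; exists i, x, y.
case=> [[i [x [y [h [-> ->]]]]] | []]; first by exists i, x, y.
all: case=> [i [j [x [y [hx hy -> ->]]]]].
- by rewrite (con01_class0 (Hal i) hx) (con01_class0 (Hal j) hy) !hemb0; apply: hlift_refl.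
- by rewrite (con01_class1 (Hal i) hx) (con01_class1 (Hal j) hy) !hemb1; apply: hlift_refl.
Qed.

Lemma hlift_pair a b c d : hlift al a b -> hlift al c d ->
  (exists k (x y z w : A k),
     [/\ al k x y, al k z w, a = emb x, b = emb y & c = emb z /\ d = emb w]) \/
  [/\ hmeet a c = H0, hmeet b d = H0, hjoin a c = H1 & hjoin b d = H1].
Proof.
move=> [i [x [y [hxy -> ->]]]] [j [z [w [hzw -> ->]]]].
have [eij|ij] := classic (i = j); first by subst j; left; exists i, x, y, z, w.
have [ix|nx] := classic (inner x); last first.
  have [x' Ex'] := hemb_outer j nx; rewrite (con01_outer (Hal i) hxy nx) -Ex'.
  by left; exists j, x', x', z, w; split=> //; apply: (con_refl (Hc j)).
have [iz|nz] := classic (inner z); last first.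
  have [z' Ez'] := hemb_outer i nz; rewrite (con01_outer (Hal j) hzw nz) -Ez'.
  by left; exists i, x, y, z', z'; split=> //; apply: (con_refl (Hc i)).
have iy := con01_inner (Hal i) hxy ix; have iw := con01_inner (Hal j) hzw iz.
by right; split;
  [apply: hmeet_cross | apply: hmeet_cross | apply: hjoin_cross | apply: hjoin_cross].
Qed.

Lemma hlift_ConBI : isConBI (hlift al).
Proof.
split; first split.
- exact: hlift_refl.
- move=> u v [i [x [y [h -> ->]]]].
  by exists i, y, x; split=> //; apply: (con_sym (Hc i)).
- move=> u v w [i [x [y [hxy -> Ev]]]] [j [y' [z [hyz Ev' ->]]]].
  have Ey : emb y = emb y' by rewrite -Ev -Ev'.
  have [eij|ij] := classic (i = j).
    subst j; rewrite -(hemb_inj Ey) in hyz.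
    by exists i, x, z; split=> //; apply: (con_trans (Hc i) hxy hyz).
  have ny := hemb_cross ij Ey; have ny' := hemb_cross (nesym ij) (esym Ey).
  rewrite (con01_outer (Hal i) (con_sym (Hc i) hxy) ny) Ey.
  by rewrite -(con01_outer (Hal j) hyz ny'); apply: hlift_refl.
- move=> a b c d h1 h2; case: (hlift_pair h1 h2) => [|[/= -> -> _ _]]; last exact: hlift_refl.
  case=> k [x [y [z [w [hxy hzw -> -> [-> ->]]]]]].
  exists k, (bmeet x z), (bmeet y w); rewrite /= !hmeet_hemb.
  by split=> //; apply: (con_meet (Hc k)).
- move=> a b c d h1 h2; case: (hlift_pair h1 h2) => [|[/= _ _ -> ->]]; last exact: hlift_refl.
  case=> k [x [y [z [w [hxy hzw -> -> [-> ->]]]]]].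
  exists k, (bjoin x z), (bjoin y w); rewrite /= !hjoin_hemb.
  by split=> //; apply: (con_join (Hc k)).
- move=> u v [i [x [y [h -> ->]]]].
  by exists i, (binv x), (binv y); rewrite /= !hinv_hemb; split=> //; apply: (con_inv (Hc i)).
Qed.

Lemma hlift_not01 : ~ hlift al H0 H1.
Proof.
case=> i [x [y [h /esym/hemb_eq0 ex /esym/hemb_eq1 ey]]]; subst x y.
exact: bot_neq_top (con01_class1 (Hal i) h).
Qed.

Lemma hrestr_hlift i (x y : A i) : hrestr (hlift al) i x y <-> al i x y.
Proof.
split=> [[j [x' [y' [h Ex Ey]]]] | h]; last by exists i, x, y.
have [eji|ji] := classic (j = i).
  by subst j; rewrite (hemb_inj Ex) (hemb_inj Ey).
have nx' := hemb_cross ji (esym Ex).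
have -> : y = x by apply: hemb_inj; rewrite Ey Ex (con01_outer (Hal j) h nx').
exact: (con_refl (Hc i)).
Qed.
End HsumLift.

Lemma hsum_ConBIE (th : rel_of (hsum A)) :
  isConBI th <->
  (forall u v, th u v <-> nabla u v) \/
  exists al : forall i, rel_of (A i),
    (forall i, isConBI01 (al i)) /\ (forall u v, th u v <-> hsum_rel al u v).
Proof.
split=> [Hth | [E | [al [Hal E]]]].
- have [h01 | n01] := classic (th H0 H1).
    by left=> u v; split=> // _; apply: hcon_nabla.
  right; exists (hrestr th); split=> [|u v]; first exact: hrestr_Con01.
  by rewrite hsum_relE; [apply: hcon_hlift | apply: hrestr_Con01].
- by apply: isConBI_ext (nabla_ConBI _) => u v; split=> /E.
- apply: isConBI_ext (hlift_ConBI Hal) => u v.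
  by rewrite E hsum_relE.
Qed.

Definition hcon_split (th : ConBI (hsum A)) : option (forall i, ConBI01 (A i)) :=
  match excluded_middle_informative (sval th H0 H1) with
  | left _ => None
  | right n01 =>
    Some (fun i => exist _ (hrestr (sval th) i) (hrestr_Con01 (svalP th) n01 i))
  end.

Definition hcon_glue (o : option (forall i, ConBI01 (A i))) : ConBI (hsum A) :=
  if o is Some al then
    exist _ (hlift (fun i => sval (al i))) (hlift_ConBI (fun i => svalP (al i)))
  else exist _ (@nabla (hsum A)) (nabla_ConBI _).

Lemma hcon_splitK : cancel hcon_split hcon_glue.
Proof.
case=> th Hth; rewrite /hcon_split /=.
case: excluded_middle_informative => [h01|n01]; apply: rel_sig_ext => u v /=.
  by split=> // _; apply: hcon_nabla.
by split=> /(hcon_hlift Hth n01).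
Qed.

Lemma hcon_glueK : cancel hcon_glue hcon_split.
Proof.
case=> [al|]; rewrite /hcon_split /=; case: excluded_middle_informative => // h01.
- by case: (hlift_not01 (fun i => svalP (al i)) h01).
- congr Some; apply: functional_extensionality_dep => i.
  by apply: rel_sig_ext => x y /=; apply: hrestr_hlift (fun i => svalP (al i)) _ _ _.
- by case: h01.
Qed.

Lemma ConBI_hsum_iso : order_iso (@ConBI_le (hsum A))
  (addtop_le (prod_le (fun i => @ConBI01_le (A i)))).
Proof.
exists hcon_split; split; first exact: Bijective hcon_splitK hcon_glueK.
move=> [th Hth] [ph Hph]; rewrite /hcon_split /ConBI_le /rel_incl /=.
case: excluded_middle_informative => [h01|n01];
case: excluded_middle_informative => [h01'|n01'] //=.
- by split=> // _ u v _; apply: hcon_nabla.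
- by split=> // /(_ _ _ h01).
- by split=> // _ u v _; apply: hcon_nabla.
split=> [sub i x y | sub u v huv]; first exact: sub.
have [i [x [y [Eu Ev]]]] := hcon_same_summand Hth n01 huv; subst u v.
exact: (sub i x y huv).
Qed.
End HorizontalSum.

Section OrderIso.
Variables (P Q R : Type) (lP : P -> P -> Prop) (lQ : Q -> Q -> Prop) (lR : R -> R -> Prop).

Lemma order_iso_trans : order_iso lP lQ -> order_iso lQ lR -> order_iso lP lR.
Proof.
move=> [f [bf Hf]] [g [bg Hg]]; exists (g \o f); split; first exact: bij_comp.
by move=> x y; rewrite Hf Hg.
Qed.

Lemma order_iso_addtop : order_iso lP lQ -> order_iso (addtop_le lP) (addtop_le lQ).
Proof.
case=> f [[g fK gK] mono]; exists (omap f); split.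
  by exists (omap g); case=> [x|] //=; rewrite ?fK ?gK.
by case=> [x|] [y|] //=.
Qed.
End OrderIso.

Lemma order_iso_prod (J : Type) (P Q : J -> Type)
    (lP : forall j, P j -> P j -> Prop) (lQ : forall j, Q j -> Q j -> Prop) :
  (forall j, order_iso (lP j) (lQ j)) -> order_iso (prod_le lP) (prod_le lQ).
Proof.
move=> iso.
have fg_ex j : exists fg : (P j -> Q j) * (Q j -> P j),
    [/\ cancel fg.1 fg.2, cancel fg.2 fg.1 & forall x y, lP j x y <-> lQ j (fg.1 x) (fg.1 y)].
  by have [f [[g fK gK] mono]] := iso j; exists (f, g).
pose fg j := proj1_sig (constructive_indefinite_description _ (fg_ex j)).
have fgP j : [/\ cancel (fg j).1 (fg j).2, cancel (fg j).2 (fg j).1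
    & forall x y, lP j x y <-> lQ j ((fg j).1 x) ((fg j).1 y)].
  exact: proj2_sig (constructive_indefinite_description _ (fg_ex j)).
exists (fun p j => (fg j).1 (p j)); split.
  exists (fun q j => (fg j).2 (q j)) => p; apply: functional_extensionality_dep => j;
  by case: (fgP j) => fK gK _; rewrite ?fK ?gK.
by move=> p q; split=> le j; have [_ _ mono] := fgP j; apply/mono; apply: le.
Qed.

Section OrdinalSum.
Variable M : biops.

Lemma osum_bilattice : is_bilattice M -> is_bilattice (osum M).
Proof.
move=> HM; have [mC [jC [mA [jA [mK [jK [_ [iK iL]]]]]]]] := HM.
split; first by case=> [|x|] [|y|] //=; rewrite mC.
split; first by case=> [|x|] [|y|] //=; rewrite jC.
split; first by case=> [|x|] [|y|] [|z|] //=; rewrite mA.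
split; first by case=> [|x|] [|y|] [|z|] //=; rewrite jA.
split; first by case=> [|x|] [|y|] //=; rewrite ?mK ?(bmeetxx HM).
split; first by case=> [|x|] [|y|] //=; rewrite ?jK ?(bjoinxx HM).
split; first by case=> [|x|].
split; first by case=> [|x|] //=; rewrite iK.
by case=> [|x|] [|y|] //; rewrite /ble /= => -[E]; congr OMid; apply: iL.
Qed.

Definition oext (al : rel_of M) : rel_of (osum M) := fun u v =>
  match u, v with
  | OBot, OBot | OTop, OTop => True
  | OMid x, OMid y => al x y
  | _, _ => False
  end.

Definition orestr (be : rel_of (osum M)) : rel_of M := fun x y => be (OMid x) (OMid y).

Lemma oext_Con01 al : isConBI al -> isConBI01 (oext al).
Proof.
move=> Hal; split; first split; first split.
- by case=> //= x; apply: (con_refl Hal).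
- by case=> [|x|] [|y|] //=; apply: (con_sym Hal).
- by case=> [|x|] [|y|] [|z|] //=; apply: (con_trans Hal).
- by case=> [|a|] [|b|] [|c|] [|d|] //=; apply: (con_meet Hal).
- by case=> [|a|] [|b|] [|c|] [|d|] //=; apply: (con_join Hal).
- by case=> [|a|] [|b|] //=; apply: (con_inv Hal).
- by case.
- by case.
Qed.

Lemma orestr_ConBI be : isConBI01 be -> isConBI (orestr be).
Proof.
move/con01_ConBI=> Hbe; rewrite /orestr; split; first split.
- by move=> x; apply: (con_refl Hbe).
- by move=> x y; apply: (con_sym Hbe).
- by move=> x y z; apply: (con_trans Hbe).
- by move=> a b c d h1 h2; apply: (con_meet Hbe h1 h2).
- by move=> a b c d h1 h2; apply: (con_join Hbe h1 h2).
- by move=> a b h; apply: (con_inv Hbe h).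
Qed.

Lemma oext_orestr be : isConBI01 be -> forall u v, oext (orestr be) u v <-> be u v.
Proof.
move=> Hbe u v; have Hc := con01_ConBI Hbe; split=> [|h].
  by case: u v => [|x|] [|y|] //= _; apply: (con_refl Hc).
case: u v h => [|x|] [|y|] //= h.
all: by [case: (con01_class0 Hbe h) | case: (con01_class1 Hbe h)
      | case: (con01_class0 Hbe (con_sym Hc h)) | case: (con01_class1 Hbe (con_sym Hc h))].
Qed.

Lemma ConBI01_osum_iso : order_iso (@ConBI01_le (osum M)) (@ConBI_le M).
Proof.
pose f (be : ConBI01 (osum M)) : ConBI M := exist _ _ (orestr_ConBI (svalP be)).
pose g (al : ConBI M) : ConBI01 (osum M) := exist _ _ (oext_Con01 (svalP al)).
exists f; split.
  exists g => [be|al]; apply: rel_sig_ext => //= u v.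
  exact: oext_orestr (svalP be) u v.
move=> be be'; split=> [sub x y | sub u v]; first exact: sub.
move/(oext_orestr (svalP be)) => h; apply/(oext_orestr (svalP be')).
by case: u v h => [|x|] [|y|] //=; apply: sub.
Qed.
End OrdinalSum.

Section OrdinalSumFamily.
Variables (I : eqType) (L : I -> biops).
Hypothesis HL : forall i, is_bilattice (L i).
Variables i1 i2 : I.
Hypothesis i1_neq_i2 : i1 <> i2.

Local Notation A := (fun i => osum (L i)).

Let HA i : is_bilattice (A i) := osum_bilattice (HL i).

Let A_inner i : exists x : A i, inner x.
Proof. by exists (OMid (bbot (L i))). Qed.

Lemma hlift_lsum (be : forall i, rel_of (A i)) : (forall i, isConBI01 (be i)) ->
  forall u v, hlift be u v <-> lsum_rel (fun i => orestr (be i)) u v.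
Proof.
move=> Hbe u v; split=> [[i [x [y [h -> ->]]]] | ].
  have Hc := con01_ConBI (Hbe i); case: x h => [|x|] h.
  - by rewrite (con01_class0 (Hbe i) (con_sym Hc h)) !hemb0; left.
  - case: y h => [|y|] h; last 2 first.
    + by right; right; exists i, x, y.
    + by case: (con01_class1 (Hbe i) h).
    + by case: (con01_class0 (Hbe i) h).
  - by rewrite (con01_class1 (Hbe i) (con_sym Hc h)) !(hemb1 HA A_inner); right; left.
case=> [[-> ->] | [[-> ->] | [i [x [y [h [-> ->]]]]]]]; last by exists i, (OMid x), (OMid y).
all: exact: (hlift_refl HA A_inner i1 Hbe).
Qed.

Lemma lsum_ConBIE (th : rel_of (hsum A)) :
  isConBI th <->
  (forall u v, th u v <-> nabla u v) \/
  exists al : forall i, rel_of (L i),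
    (forall i, isConBI (al i)) /\ (forall u v, th u v <-> lsum_rel al u v).
Proof.
have hsumE := hsum_ConBIE HA A_inner i1_neq_i2 th.
split=> [/hsumE [E | [be [Hbe E]]] | [E | [al [Hal E]]]]; first by left.
- right; exists (fun i => orestr (be i)); split=> [i|u v]; first exact: orestr_ConBI.
  by rewrite E (hsum_relE HA A_inner i1 Hbe) hlift_lsum.
- by apply/hsumE; left.
- have Hbe i := oext_Con01 (Hal i).
  apply/hsumE; right; exists (fun i => oext (al i)); split=> // u v.
  by rewrite E (hsum_relE HA A_inner i1 Hbe) hlift_lsum.
Qed.

Lemma ConBI_lsum_iso : order_iso (@ConBI_le (hsum A))
  (addtop_le (prod_le (fun i => @ConBI_le (L i)))).
Proof.
apply: order_iso_trans (ConBI_hsum_iso HA A_inner i1_neq_i2) _.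
by apply/order_iso_addtop/order_iso_prod => i; apply: ConBI01_osum_iso.
Qed.
End OrdinalSumFamily.

Theorem proposition4p21 (t : nat) (K L : 'I_t -> biops) :
  2 <= t ->
  (forall i, is_bilattice (K i)) ->
  (forall i, is_bilattice (L i)) ->
  (forall i, exists a b c : K i, [/\ a <> b, a <> c & b <> c]) ->
  (* (1) K = boxplus_i K_i *)
  ((forall th : rel_of (hsum K),
      isConBI th <->
      ((forall u v, th u v <-> nabla u v) \/
       exists al : forall i, rel_of (K i),
         (forall i, isConBI01 (al i)) /\
         (forall u v, th u v <-> hsum_rel al u v))) /\
   order_iso (@ConBI_le (hsum K))
     (addtop_le (prod_le (fun i => @ConBI01_le (K i))))) /\
  (* (2) L = boxplus_i (L2 (+) L_i (+) L2) *)
  ((forall th : rel_of (hsum (fun i => osum (L i))),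
      isConBI th <->
      ((forall u v, th u v <-> nabla u v) \/
       exists al : forall i, rel_of (L i),
         (forall i, isConBI (al i)) /\
         (forall u v, th u v <-> lsum_rel al u v))) /\
   order_iso (@ConBI_le (hsum (fun i => osum (L i))))
     (addtop_le (prod_le (fun i => @ConBI_le (L i))))).
Proof.
move=> t2 HK HL K3.
pose i1 : 'I_t := Ordinal (ltnW t2); pose i2 : 'I_t := Ordinal t2.
have i12 : i1 <> i2 by move/(congr1 val).
have K_inner i : exists x : K i, inner x.
  by have [a [b [c abc]]] := K3 i; apply: distinct3_inner abc.
split; first split.
- exact: (hsum_ConBIE HK K_inner i12).
- exact: (ConBI_hsum_iso HK K_inner i12).
split; [exact: (lsum_ConBIE HL i12) | exact: (ConBI_lsum_iso HL i12)].
Qed.
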